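(* Let $\mathbf{K}=(K,\leq_p)$ be an AEC such that $K$ is a class of torsion-free abelian groups, $K$ is closed under pure subgroups, and $K$ has arbitrarily large models. Then $\mathbf{K}$ is $\lambda$-stable for every infinite cardinal $\lambda$ with $\lambda^{\aleph_0}=\lambda$.
   Context: Abelian groups are $\mathbb{Z}$-modules; $\leq_p$ is the pure subgroup relation. An AEC $(K,\leq_p)$: closed under isomorphism and unions of $\leq_p$-chains, with a Löwenheim–Skolem number. Galois types $\mathbf{gtp}(b/A;N)$ are classes of triples $(b,A,N)$ under the transitive closure of: $(b_1,A,N_1)\sim(b_2,A,N_2)$ iff there exist $N'\in K$ and pure embeddings $f_\ell:N_\ell\to N'$ fixing $A$ with $f_1(b_1)=f_2(b_2)$; $\mathbf{gS}(M)$ is the set of Galois types of single elements over $M$ in pure extensions in $K$. $\mathbf{K}$ is $\lambda$-stable if $|\mathbf{gS}(M)|\leq\lambda$ for all $M\in K$ of size $\lambda$. *)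

From HB Require Import structures.
From mathcomp Require Import all_boot all_algebra.
From Stdlib Require Import Relations.
Set Implicit Arguments. Unset Strict Implicit. Unset Printing Implicit Defensive.
Import GRing.Theory.
Local Open Scope ring_scope.

Definition is_hom (G H : zmodType) (f : G -> H) : Prop :=
  forall x y, f (x + y) = f x + f y.

Definition subset_of (U : Type) (S T : U -> Prop) : Prop := forall x, S x -> T x.

Definition pure_in (U : zmodType) (S T : U -> Prop) : Prop :=
  forall (n : nat) (s : U), S s -> (exists t, T t /\ t *+ n = s) ->
    exists y, S y /\ y *+ n = s.

Definition range_of (A B : Type) (f : A -> B) : B -> Prop := fun y => exists x, f x = y.

Definition pure_emb (G H : zmodType) (f : G -> H) : Prop :=
  injective f /\ is_hom f /\ pure_in (range_of f) (fun _ => True).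

(** Cardinal comparisons of types (types stand for cardinals). *)
Definition same_card (A B : Type) : Prop := exists f : A -> B, bijective f.
Definition le_card (A B : Type) : Prop := exists f : A -> B, injective f.
Definition infinite_type (A : Type) : Prop := le_card nat A.

Definition in_K (K : zmodType -> Prop) (U : zmodType) (S : U -> Prop) : Prop :=
  exists (G : zmodType) (f : G -> U),
    K G /\ injective f /\ is_hom f /\ (forall y, S y <-> range_of f y).

Definition bigU (U : Type) (C : (U -> Prop) -> Prop) : U -> Prop :=
  fun x => exists S, C S /\ S x.

(** The partial-order and coherence
    axioms are automatic for the pure-subgroup relation; chains are indexed by
    well-orders (given as well-ordered families of subgroups of an ambient group). *)
Record AEC_pure (K : zmodType -> Prop) : Prop := {
  aec_iso : forall (G H : zmodType) (f : G -> H),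
      K G -> is_hom f -> bijective f -> K H;
  aec_chain : forall (U : zmodType) (C : (U -> Prop) -> Prop),
      (exists S, C S) ->
      (forall S T, C S -> C T -> subset_of S T \/ subset_of T S) ->
      (forall D : (U -> Prop) -> Prop, (forall S, D S -> C S) -> (exists S, D S) ->
         exists S0, D S0 /\ forall S, D S -> subset_of S0 S) ->
      (forall S, C S -> in_K K S) ->
      (forall S T, C S -> C T -> subset_of S T -> pure_in S T) ->
      in_K K (bigU C) /\ (forall S, C S -> pure_in S (bigU C));
  aec_LS : exists Mu : Type, infinite_type Mu /\
      forall N : zmodType, K N -> forall A : N -> Prop,
        exists (G : zmodType) (f : G -> N),
          K G /\ pure_emb f /\ subset_of A (range_of f) /\
          le_card G ({a | A a} + Mu)%type
}.

Definition torsion_free_class (K : zmodType -> Prop) : Prop :=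
  forall G : zmodType, K G -> forall (x : G) (n : nat), (0 < n)%N -> x *+ n = 0 -> x = 0.

Definition closed_pure_sub (K : zmodType -> Prop) : Prop :=
  forall (G N : zmodType) (f : G -> N), K N -> pure_emb f -> K G.

Definition arb_large (K : zmodType -> Prop) : Prop :=
  forall L : Type, exists N : zmodType, K N /\ le_card L N.

(** Triples (b, M, N) with M <=_p N, N ∈ K, b ∈ N (M embedded purely into N via f). *)
Record gtriple (K : zmodType -> Prop) (M : zmodType) := GTriple {
  gt_N : zmodType;
  gt_K : K gt_N;
  gt_f : M -> gt_N;
  gt_emb : pure_emb gt_f;
  gt_b : gt_N
}.

(** Atomic equivalence: amalgamation over M identifying the two elements. *)
Definition gtp_atomic (K : zmodType -> Prop) (M : zmodType) (t1 t2 : gtriple K M) : Prop :=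
  exists (N' : zmodType) (g1 : gt_N t1 -> N') (g2 : gt_N t2 -> N'),
    K N' /\ pure_emb g1 /\ pure_emb g2 /\
    (forall m, g1 (gt_f t1 m) = g2 (gt_f t2 m)) /\ g1 (gt_b t1) = g2 (gt_b t2).

Definition gtp_eq (K : zmodType -> Prop) (M : zmodType) : relation (gtriple K M) :=
  clos_trans _ (@gtp_atomic K M).

(** |gS(M)| <= |L|: an injection of the set of Galois types into L. *)
Definition gS_le (K : zmodType -> Prop) (M : zmodType) (L : Type) : Prop :=
  exists F : gtriple K M -> L, forall t1 t2, gtp_eq t1 t2 <-> F t1 = F t2.

Definition stable (K : zmodType -> Prop) (L : Type) : Prop :=
  forall M : zmodType, K M -> same_card M L -> gS_le K M L.

From HB Require Import structures.
From mathcomp Require Import all_boot all_algebra.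
From mathcomp Require Import boolp.
From Stdlib Require Import Relations.
Set Implicit Arguments. Unset Strict Implicit. Unset Printing Implicit Defensive.
Import GRing.Theory.
Local Open Scope ring_scope.

(* The Galois type of b over M, with M pure in a torsion-free N, is determined
   by its divisibility data: for which k, m and j the element m + j b is
   divisible by k in N.  By purity each nonempty set {m | k divides m + j b} is a coset of kM, so
   one representative per (k, j) records the data, and a type is coded by a
   function nat * int -> option M; there are |M|^aleph_0 = lambda of those.
   Conversely, if (b1, M, N1) and (b2, M, N2) have the same data, the pure
   closure P of M + Z b1 in N1 is in K, and sending x to y whenever
   k x = m + j b1 and k y = m + j b2 with k > 0 is well defined and a pure
   embedding of P into N2 by torsion-freeness; so both triples are equivalent
   to (b1, M, P). *)

Lemma is_hom_zmod_morphism (G H : zmodType) (f : G -> H) :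
  is_hom f -> GRing.zmod_morphism f.
Proof.
move=> f_hom x y.
have f0 : f 0 = 0 by apply: (addrI (f 0)); rewrite -f_hom !addr0.
have fN z : f (- z) = - f z by apply: (addrI (f z)); rewrite -f_hom !subrr.
by rewrite f_hom fN.
Qed.

Section SubZmodule.
Variables (U : zmodType) (S : pred U).

(* The closedness proof is a parameter so that the instances can depend on it. *)
Definition subzmod of zmod_closed S := {x : U | S x}.

Hypothesis S_zmod : zmod_closed S.
HB.instance Definition _ := [isSub of subzmod S_zmod for @sval U S].
HB.instance Definition _ := [Choice of subzmod S_zmod by <:].
HB.instance Definition _ := GRing.isZmodClosed.Build U S S_zmod.
HB.instance Definition _ := [SubChoice_isSubZmodule of subzmod S_zmod by <:].

End SubZmodule.

Definition divisible (G : zmodType) (k : nat) (x : G) : Prop := exists y, y *+ k = x.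

Definition torsion_free (G : zmodType) : Prop :=
  forall (x : G) (n : nat), (0 < n)%N -> x *+ n = 0 -> x = 0.

Lemma divisible0 (G : zmodType) (x : G) : divisible 0 x <-> x = 0.
Proof. by split=> [[y <-]|->]; [rewrite mulr0n | exists 0]. Qed.

Lemma divisibleD (G : zmodType) k (x y : G) :
  divisible k x -> divisible k y -> divisible k (x + y).
Proof. by move=> [x' <-] [y' <-]; exists (x' + y'); rewrite mulrnDl. Qed.

Lemma divisibleB (G : zmodType) k (x y : G) :
  divisible k x -> divisible k y -> divisible k (x - y).
Proof. by move=> [x' <-] [y' <-]; exists (x' - y'); rewrite mulrnBl. Qed.

Lemma pure_emb_id (G : zmodType) : pure_emb (@id G).
Proof. by do 2!split=> //; move=> n s _ [t [_ ht]]; exists t; split=> //; exists t. Qed.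

Section Homomorphism.
Variables (G H : zmodType) (f : G -> H).
Hypothesis f_hom : is_hom f.
HB.instance Definition _ := GRing.isZmodMorphism.Build G H f (is_hom_zmod_morphism f_hom).

Lemma divisible_hom k x : divisible k x -> divisible k (f x).
Proof. by move=> [y <-]; exists (f y); rewrite raddfMn. Qed.

Lemma pure_emb_divisor_closed :
  injective f ->
  (forall n x (t : H), (0 < n)%N -> t *+ n = f x -> range_of f t) -> pure_emb f.
Proof.
move=> f_inj f_div; do 2!split=> //; case=> [|n] s s_f [t [_ tn]].
  by exists s; rewrite mulr0n in tn *.
case: s_f tn => x <- tn.
by exists t; split=> //; apply: f_div tn.
Qed.

Lemma pure_emb_compr (E : zmodType) (g : E -> G) :
  injective f -> pure_emb (f \o g) -> pure_emb g.
Proof.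
move=> f_inj [fg_inj [fg_hom fg_pure]].
split; first by move=> x y /(congr1 f) /fg_inj.
split=> [x y|n _ [x <-] [t [_ tn]]]; first by apply: f_inj; rewrite raddfD; apply: fg_hom.
have ftn : f t *+ n = (f \o g) x by rewrite -raddfMn tn.
have [_ [[y <-] yn]] := fg_pure n _ (ex_intro _ x erefl) (ex_intro _ _ (conj I ftn)).
by exists (g y); split; [exists y | apply: f_inj; rewrite raddfMn].
Qed.

End Homomorphism.

Section PureEmbedding.
Variables (G H : zmodType) (f : G -> H).
Hypothesis f_pure : pure_emb f.
HB.instance Definition _ :=
  GRing.isZmodMorphism.Build G H f (is_hom_zmod_morphism f_pure.2.1).

Lemma pure_emb_divisible k x : divisible k (f x) <-> divisible k x.
Proof.
split; last exact: divisible_hom f_pure.2.1 k x.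
move=> [t tk].
have [_ [[y <-] yk]] := f_pure.2.2 k _ (ex_intro _ x erefl) (ex_intro _ t (conj I tk)).
by exists y; apply: f_pure.1; rewrite raddfMn.
Qed.

Lemma pure_emb_divisible_coset k (z : H) m0 :
  divisible k (f m0 + z) -> forall m, divisible k (f m + z) <-> divisible k (m - m0).
Proof.
move=> m0_div m; rewrite -pure_emb_divisible raddfB.
split=> [m_div | /divisibleD/(_ m0_div)]; last by rewrite addrA subrK.
by have := divisibleB m_div m0_div; rewrite opprD addrACA subrr addr0.
Qed.

End PureEmbedding.

Section Matching.
Variables (V N1 N2 : zmodType) (phi1 : V -> N1) (phi2 : V -> N2).

Definition matched (x : N1) (y : N2) : Prop :=
  exists k v, [/\ (0 < k)%N, x *+ k = phi1 v & y *+ k = phi2 v].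

Hypotheses (phi1_hom : is_hom phi1) (phi2_hom : is_hom phi2).
HB.instance Definition _ :=
  GRing.isZmodMorphism.Build V N1 phi1 (is_hom_zmod_morphism phi1_hom).
HB.instance Definition _ :=
  GRing.isZmodMorphism.Build V N2 phi2 (is_hom_zmod_morphism phi2_hom).

Lemma matched_phi v : matched (phi1 v) (phi2 v).
Proof. by exists 1%N, v. Qed.

Lemma matchedN x y : matched x y -> matched (- x) (- y).
Proof. by case=> k [v [k_gt0 xk yk]]; exists k, (- v); rewrite !raddfN !mulNrn xk yk. Qed.

Lemma matchedD x y x' y' : matched x y -> matched x' y' -> matched (x + x') (y + y').
Proof.
case=> k [v [k_gt0 xk yk]] [k' [v' [k'_gt0 xk' yk']]].
have scale (W : zmodType) (w w' : W) : (w + w') *+ (k * k') = w *+ k *+ k' + w' *+ k' *+ k.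
  by rewrite mulrnDl mulrnA mulnC mulrnA.
exists (k * k')%N, (v *+ k' + v' *+ k).
by rewrite muln_gt0 k_gt0 !scale xk yk xk' yk' !raddfD !raddfMn.
Qed.

Lemma matched_functional x y y' :
  torsion_free N2 -> (forall v, phi1 v = 0 -> phi2 v = 0) ->
  matched x y -> matched x y' -> y = y'.
Proof.
move=> tf2 ker12 xy xy'.
have [k [v [k_gt0]]] := matchedD xy (matchedN xy').
rewrite subrr mul0rn => /esym/ker12 phi2v0 yk.
by apply/eqP; rewrite -subr_eq0; apply/eqP/(tf2 _ k) => //; rewrite yk.
Qed.

End Matching.

Lemma matched_sym (V N1 N2 : zmodType) (phi1 : V -> N1) (phi2 : V -> N2) x y :
  matched phi1 phi2 x y -> matched phi2 phi1 y x.
Proof. by case=> k [v [k_gt0 xk yk]]; exists k, v. Qed.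

Section PureHull.
Variables (V N1 N2 : zmodType) (phi1 : V -> N1) (phi2 : V -> N2).
Hypotheses (phi1_hom : is_hom phi1) (phi2_hom : is_hom phi2).
HB.instance Definition _ :=
  GRing.isZmodMorphism.Build V N1 phi1 (is_hom_zmod_morphism phi1_hom).
HB.instance Definition _ :=
  GRing.isZmodMorphism.Build V N2 phi2 (is_hom_zmod_morphism phi2_hom).

(* Under [same_divisibility] below, this is the pure closure of phi1(V) in N1. *)
Definition in_hull : pred N1 := fun x => `[< exists y, matched phi1 phi2 x y >].

Lemma in_hullP x : reflect (exists y, matched phi1 phi2 x y) (in_hull x).
Proof. exact: asboolP. Qed.

Lemma hull_zmod_closed : zmod_closed in_hull.
Proof.
split=> [|x y /in_hullP[x' xx'] /in_hullP[y' yy']]; apply/in_hullP.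
  by exists 0; rewrite -(raddf0 phi1) -(raddf0 phi2); apply: matched_phi.
by exists (x' - y'); apply: matchedD => //; apply: matchedN.
Qed.

Definition hull := subzmod hull_zmod_closed.

Definition hull_map (u : hull) : N2 := sval (cid (in_hullP (val u) (valP u))).

Lemma hull_mapP u : matched phi1 phi2 (val u) (hull_map u).
Proof. exact: svalP. Qed.

Lemma phi_in_hull v : in_hull (phi1 v).
Proof. by apply/in_hullP; exists (phi2 v); apply: matched_phi. Qed.

Definition hull_of (v : V) : hull := Sub (phi1 v) (phi_in_hull v).

Lemma val_hull_of v : val (hull_of v) = phi1 v.
Proof. exact: SubK. Qed.

Hypotheses (tf1 : torsion_free N1) (tf2 : torsion_free N2).
Hypothesis same_divisibility :
  forall k v, divisible k (phi1 v) <-> divisible k (phi2 v).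

Let kernel12 v : phi1 v = 0 -> phi2 v = 0.
Proof. by move=> /divisible0/same_divisibility/divisible0. Qed.

Let kernel21 v : phi2 v = 0 -> phi1 v = 0.
Proof. by move=> /divisible0/same_divisibility/divisible0. Qed.

Lemma hull_map_eq u y : matched phi1 phi2 (val u) y -> hull_map u = y.
Proof. exact: matched_functional tf2 kernel12 (hull_mapP u). Qed.

Lemma hull_map_of v : hull_map (hull_of v) = phi2 v.
Proof. by apply: hull_map_eq; rewrite val_hull_of; apply: matched_phi. Qed.

Lemma hull_map_inj : injective hull_map.
Proof.
move=> u u' eq_map; apply: val_inj.
apply: (matched_functional phi2_hom phi1_hom tf1 kernel21); apply: matched_sym.
  exact: hull_mapP.
by rewrite eq_map; apply: hull_mapP.
Qed.

Lemma hull_map_hom : is_hom hull_map.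
Proof.
move=> u u'; apply: hull_map_eq; rewrite raddfD.
by apply: matchedD => //; apply: hull_mapP.
Qed.

Lemma pure_emb_hull_map : pure_emb hull_map.
Proof.
apply: pure_emb_divisor_closed hull_map_hom hull_map_inj _ => n u t n_gt0 tn.
have [k [v [k_gt0 uk]]] := hull_mapP u; rewrite -tn -mulrnA => tnk.
have [x xnk] : divisible (n * k) (phi1 v) by apply/same_divisibility; exists t.
have xt : matched phi1 phi2 x t by exists (n * k)%N, v; rewrite muln_gt0 n_gt0.
have x_hull : in_hull x by apply/in_hullP; exists t.
by exists (Sub x x_hull); apply: hull_map_eq; rewrite SubK.
Qed.

Lemma pure_emb_hull_val : pure_emb (val : hull -> N1).
Proof.
apply: pure_emb_divisor_closed (raddfD val) val_inj _ => n u t n_gt0 tn.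
have [_ [k [v [k_gt0 uk _]]]] := in_hullP _ (valP u).
have tnk : t *+ (n * k) = phi1 v by rewrite mulrnA tn.
have [z znk] : divisible (n * k) (phi2 v) by apply/same_divisibility; exists t.
have t_hull : in_hull t.
  by apply/in_hullP; exists z, (n * k)%N, v; rewrite muln_gt0 n_gt0.
by exists (Sub t t_hull : hull); exact: SubK.
Qed.

End PureHull.

Definition some_witness (A : Type) (P : A -> Prop) : option A :=
  if pselect (exists x, P x) is left ex then Some (sval (cid ex)) else None.

Variant some_witness_spec (A : Type) (P : A -> Prop) : option A -> Prop :=
  | SomeWitness x of P x : some_witness_spec P (Some x)
  | NoWitness of ~ (exists x, P x) : some_witness_spec P None.

Lemma some_witnessP (A : Type) (P : A -> Prop) : some_witness_spec P (some_witness P).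
Proof.
by rewrite /some_witness; case: pselect => [ex|no_ex]; constructor; [apply: svalP|].
Qed.

Definition lin_form (M N : zmodType) (f : M -> N) (b : N) (u : M * int) : N :=
  f u.1 + b *~ u.2.

Section LinearForm.
Variables (M N N' : zmodType) (f : M -> N) (b : N) (g : N -> N').
Hypotheses (f_hom : is_hom f) (g_hom : is_hom g).
HB.instance Definition _ := GRing.isZmodMorphism.Build M N f (is_hom_zmod_morphism f_hom).
HB.instance Definition _ := GRing.isZmodMorphism.Build N N' g (is_hom_zmod_morphism g_hom).

Lemma lin_form_m0 m : lin_form f b (m, 0) = f m.
Proof. by rewrite /lin_form mulr0z addr0. Qed.

Lemma lin_form_01 : lin_form f b (0, 1) = b.
Proof. by rewrite /lin_form raddf0 add0r. Qed.

Lemma lin_form_hom : is_hom (lin_form f b).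
Proof. by move=> [m j] [m' j']; rewrite /lin_form /= raddfD mulrzDr addrACA. Qed.

Lemma hom_lin_form u : g (lin_form f b u) = lin_form (g \o f) (g b) u.
Proof. by rewrite /lin_form raddfD raddfMz. Qed.

End LinearForm.

Section GaloisTypes.
Variables (K : zmodType -> Prop) (M : zmodType).

Definition div_data (t : gtriple K M) (k : nat) (u : M * int) : Prop :=
  divisible k (lin_form (gt_f t) (gt_b t) u).

Lemma gtp_atomic_div_data t1 t2 : gtp_atomic t1 t2 -> div_data t1 = div_data t2.
Proof.
case=> N' [g1 [g2 [_ [g1_pure [g2_pure [eq_f eq_b]]]]]].
apply: funext => k; apply: funext => u; apply: propext.
apply: iff_trans (iff_sym (pure_emb_divisible g1_pure k _)) _.
apply: iff_trans (pure_emb_divisible g2_pure k _).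
rewrite (hom_lin_form _ _ g1_pure.2.1) (hom_lin_form _ _ g2_pure.2.1) eq_b.
by have -> : g1 \o gt_f t1 = g2 \o gt_f t2 by apply: funext.
Qed.

Lemma gtp_eq_div_data t1 t2 : gtp_eq t1 t2 -> div_data t1 = div_data t2.
Proof.
elim=> {t1 t2} [t1 t2 /gtp_atomic_div_data // | t1 t2 t3 _ -> _ ->] //.
Qed.

Section SameDivisibilityData.
Hypotheses (K_pure : closed_pure_sub K) (K_tf : torsion_free_class K).
Variables (t1 t2 : gtriple K M).
Hypothesis same_data : div_data t1 = div_data t2.

Let phi1_hom := lin_form_hom (gt_b t1) (gt_emb t1).2.1.
Let phi2_hom := lin_form_hom (gt_b t2) (gt_emb t2).2.1.

Let same_divisibility k u :
  divisible k (lin_form (gt_f t1) (gt_b t1) u) <->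
  divisible k (lin_form (gt_f t2) (gt_b t2) u).
Proof. by change (div_data t1 k u <-> div_data t2 k u); rewrite same_data. Qed.

Let P := hull phi1_hom phi2_hom.

Let P_in_K : K P :=
  K_pure (gt_K t1) (pure_emb_hull_val phi1_hom phi2_hom same_divisibility).

Let f_P (m : M) : P := hull_of phi1_hom phi2_hom (m, 0).

Let pure_emb_f_P : pure_emb f_P.
Proof.
apply: (pure_emb_compr (raddfD val) val_inj).
have -> : val \o f_P = gt_f t1.
  by apply: funext => m; apply: lin_form_m0.
exact: gt_emb t1.
Qed.

Let t_P := GTriple P_in_K pure_emb_f_P (hull_of phi1_hom phi2_hom (0, 1)).

Let gtp_atomic_hull_l : gtp_atomic t1 t_P.
Proof.
exists (gt_N t1), id, val.
split; [exact: gt_K | split; [exact: pure_emb_id | split]].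
  exact: pure_emb_hull_val phi1_hom phi2_hom same_divisibility.
split=> [m|] /=; first by rewrite lin_form_m0.
by rewrite (lin_form_01 _ (gt_emb t1).2.1).
Qed.

Let gtp_atomic_hull_r : gtp_atomic t_P t2.
Proof.
have tf2 := K_tf (gt_K t2).
have map_of := hull_map_of phi1_hom phi2_hom tf2 same_divisibility.
exists (gt_N t2), (@hull_map _ _ _ _ _ phi1_hom phi2_hom), id.
split; [exact: gt_K | split; [|split; first exact: pure_emb_id]].
  exact: pure_emb_hull_map (K_tf (gt_K t1)) tf2 same_divisibility.
split=> [m|] /=; first by rewrite map_of lin_form_m0.
by rewrite map_of (lin_form_01 _ (gt_emb t2).2.1).
Qed.

Lemma div_data_gtp_eq : gtp_eq t1 t2.
Proof. exact: t_trans (t_step _ _ _ _ gtp_atomic_hull_l) (t_step _ _ _ _ gtp_atomic_hull_r).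
Qed.

End SameDivisibilityData.

Definition div_code (t : gtriple K M) (kj : nat * int) : option M :=
  some_witness (fun m => div_data t kj.1 (m, kj.2)).

Lemma div_data_code t k m j :
  div_data t k (m, j) <->
  exists2 m0, div_code t (k, j) = Some m0 & divisible k (m - m0).
Proof.
rewrite /div_code /div_data /lin_form /=; case: some_witnessP => [m0 m0_data|no_data].
  have coset := pure_emb_divisible_coset (gt_emb t) m0_data m.
  by split=> [/coset m_div|[_ [<-] /coset //]]; exists m0.
by split=> [m_data|[]] //; case: no_data; exists m.
Qed.

Lemma gtp_eq_div_code (t1 t2 : gtriple K M) :
  closed_pure_sub K -> torsion_free_class K ->
  gtp_eq t1 t2 <-> div_code t1 = div_code t2.
Proof.
move=> K_pure K_tf; split=> [/gtp_eq_div_data same_data | same_code].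
  by rewrite /div_code same_data.
apply: div_data_gtp_eq => //.
apply: funext => k; apply: funext => -[m j]; apply: propext.
apply: iff_trans (div_data_code _ _ _ _) _; rewrite same_code.
exact: iff_sym (div_data_code _ _ _ _).
Qed.

End GaloisTypes.

Lemma le_card_trans (A B C : Type) : le_card A B -> le_card B C -> le_card A C.
Proof. by move=> [f f_inj] [g g_inj]; exists (g \o f); apply: inj_comp. Qed.

Lemma same_card_le (A B : Type) : same_card A B -> le_card A B.
Proof. by move=> [f /bij_inj f_inj]; exists f. Qed.

Lemma le_card_fun (I A B : Type) : le_card A B -> le_card (I -> A) (I -> B).
Proof.
move=> [f f_inj]; exists (fun g => f \o g) => g g' eq_fg; apply: funext => i.
by apply: f_inj; have := congr1 (@^~ i) eq_fg.
Qed.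

Lemma le_card_countable_fun (I : countType) (A : Type) :
  le_card (I -> A) (nat -> option A).
Proof.
exists (fun g n => omap g (unpickle n)) => g g' eq_g; apply: funext => i.
by have := congr1 (@^~ (pickle i)) eq_g; rewrite /= pickleK => -[].
Qed.

Lemma le_card_option (A L : Type) :
  le_card A L -> infinite_type L -> le_card (option A) (nat -> L).
Proof.
move=> [h h_inj] [i i_inj].
exists (fun o n => if o is Some a then h a else i n) => -[a|] [a'|] //= eq_o.
- by congr Some; apply: h_inj; have := congr1 (@^~ 0%N) eq_o.
- by move: (congr1 (@^~ 0%N) eq_o) (congr1 (@^~ 1%N) eq_o) => /= -> /i_inj.
- by move: (congr1 (@^~ 0%N) eq_o) (congr1 (@^~ 1%N) eq_o) => /= <- /i_inj.
Qed.

Lemma le_card_option_pow (A L : Type) :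
  le_card A L -> infinite_type L -> same_card (nat -> L) L -> le_card (option A) L.
Proof. by move=> A_L L_inf /same_card_le; apply: le_card_trans (le_card_option A_L L_inf). Qed.

Lemma le_card_pow_countable (I : countType) (A L : Type) :
  le_card A L -> infinite_type L -> same_card (nat -> L) L -> le_card (I -> A) L.
Proof.
move=> A_L L_inf L_pow; apply: le_card_trans (le_card_countable_fun I A) _.
apply: le_card_trans (same_card_le L_pow).
exact/le_card_fun/le_card_option_pow.
Qed.

Theorem lemma5p6 (K : zmodType -> Prop) :
  AEC_pure K -> torsion_free_class K -> closed_pure_sub K -> arb_large K ->
  forall L : Type, infinite_type L -> same_card (nat -> L) L -> stable K L.
Proof.
move=> _ K_tf K_pure _ L L_inf L_pow M _ M_L.
have option_M_L := le_card_option_pow (same_card_le M_L) L_inf L_pow.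
have [c c_inj] := le_card_pow_countable (nat * int)%type option_M_L L_inf L_pow.
exists (c \o @div_code K M) => t1 t2 /=.
apply: iff_trans (gtp_eq_div_code t1 t2 K_pure K_tf) _.
by split=> [-> | /c_inj].
Qed.
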